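(* Let $f\in\mathrm{Homeo}_*(\mathbb{T}^2)$, let $F:\mathbb{R}^2\to\mathbb{R}^2$ be a lift of $f$, and let $D\subset\mathbb{R}^2$ be a closed topological disk. Then there exist no integer $N\ne0$ and $(p,q)\in\mathbb{Z}^2$ such that $F^N(D)\subseteq T_{p,q}(D)$ or $T_{p,q}(D)\subseteq F^N(D)$, where $T_{p,q}(x,y)=(x+p,y+q)$.
   Context: $\mathbb{T}^2=\mathbb{R}^2/\mathbb{Z}^2$. $\mathrm{Homeo}_*(\mathbb{T}^2)$ is the set of homeomorphisms of $\mathbb{T}^2$ isotopic to the identity whose rotation set (the set of limit points mod $\mathbb{Z}^2$ of $(F^{n_k}(\tilde z)-\tilde z)/n_k$, $n_k\to\infty$, $\tilde z\in\mathbb{R}^2$, for a lift $F$) is a single point $(\alpha,\beta)\bmod\mathbb{Z}^2$ with $1,\alpha,\beta$ rationally independent. *)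

From Stdlib Require Import Reals ZArith.
Open Scope R_scope.

Definition pt := (R * R)%type.

(* max-norm distance on R^2 (induces the usual topology) *)
Definition dist2 (z w : pt) : R := Rmax (Rabs (fst z - fst w)) (Rabs (snd z - snd w)).

Definition cont2 (f : pt -> pt) : Prop :=
  forall z eps, eps > 0 -> exists d, d > 0 /\
    forall w, dist2 z w < d -> dist2 (f z) (f w) < eps.

Definition cont2_on (A : pt -> Prop) (f : pt -> pt) : Prop :=
  forall z, A z -> forall eps, eps > 0 -> exists d, d > 0 /\
    forall w, A w -> dist2 z w < d -> dist2 (f z) (f w) < eps.

Definition homeo2 (F G : pt -> pt) : Prop :=
  cont2 F /\ cont2 G /\ (forall z, G (F z) = z) /\ (forall z, F (G z) = z).

Definition T (p q : Z) (z : pt) : pt := (fst z + IZR p, snd z + IZR q).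

(* F commutes with integer translations: F is a lift of a homeomorphism of
   T^2 acting trivially on pi_1, i.e. isotopic to the identity. *)
Definition is_lift (F : pt -> pt) : Prop :=
  forall p q z, F (T p q z) = T p q (F z).

Fixpoint iter (n : nat) (f : pt -> pt) (z : pt) : pt :=
  match n with O => z | S k => f (iter k f z) end.

Definition iterZ (F G : pt -> pt) (N : Z) (z : pt) : pt :=
  match N with
  | Z0 => z
  | Zpos n => iter (Pos.to_nat n) F z
  | Zneg n => iter (Pos.to_nat n) G z
  end.

Definition in_rotation_set (F : pt -> pt) (v : pt) : Prop :=
  exists (z : pt) (n : nat -> nat),
    (forall M, exists K, forall k, (k >= K)%nat -> (n k >= M)%nat) /\
    (forall eps, eps > 0 -> exists K, forall k, (k >= K)%nat ->
       dist2 ((fst (iter (n k) F z) - fst z) / INR (n k),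
              (snd (iter (n k) F z) - snd z) / INR (n k)) v < eps).

Definition rationally_independent3 (a b : R) : Prop :=
  forall x y w : Z, IZR x + IZR y * a + IZR w * b = 0 -> x = 0%Z /\ y = 0%Z /\ w = 0%Z.

(* the lift F of f in Homeo_*(T^2): rotation set is a single point (alpha,beta)
   with 1, alpha, beta rationally independent *)
Definition in_Homeo_star_lift (F G : pt -> pt) : Prop :=
  homeo2 F G /\ is_lift F /\
  exists alpha beta : R,
    (forall v, in_rotation_set F v <-> v = (alpha, beta)) /\
    rationally_independent3 alpha beta.

Definition closed_unit_disk (z : pt) : Prop := fst z * fst z + snd z * snd z <= 1.

Definition closed_top_disk (D : pt -> Prop) : Prop :=
  exists h : pt -> pt,
    cont2_on closed_unit_disk h /\
    (forall u v, closed_unit_disk u -> closed_unit_disk v -> h u = h v -> u = v) /\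
    (forall z, D z <-> exists u, closed_unit_disk u /\ z = h u).

From Pilot Require Import Defs.
From Stdlib Require Import Reals ZArith Lra Lia Classical ClassicalEpsilon.
(* [ZArith] exports [Z.iter]; re-importing makes [iter] refer to [Defs.iter]. *)
Import Defs.
Open Scope R_scope.

(** If [F^m(D) ⊆ T_{p,q}(D)] with [m > 0], iterating gives
    [F^{km}(D) ⊆ T_{kp,kq}(D)], so every point of the bounded set [D] moves by
    [k(p,q)] up to a bounded error under [F^{km}]; hence [(p/m, q/m)] lies in the
    rotation set, contradicting the rational independence of [1, α, β].
    If [T_{p,q}(D) ⊆ F^m(D)], pulling back along [F^{-m} ∘ T_{p,q}] gives a
    sequence [x] in [D] with [F^{jm}(x_{j+k}) = T_{jp,jq}(x_k)]; at an
    accumulation point [y ∈ D] of [x], continuity of [F^{jm}] shows that [y] has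
    bounded displacement, with the same contradiction.  Negative [N] reduces to
    positive [N] by applying [F^{|N|}] to the inclusion. *)

Definition strict_incr (phi : nat -> nat) : Prop := forall i, (phi i < phi (S i))%nat.

Definition cv2 (u : nat -> pt) (l : pt) : Prop :=
  forall eps, eps > 0 -> exists N, forall n, (n >= N)%nat -> dist2 (u n) l < eps.

Definition seq_compact2 (A : pt -> Prop) : Prop :=
  forall u, (forall n, A (u n)) ->
  exists l phi, A l /\ strict_incr phi /\ cv2 (fun i => u (phi i)) l.

Lemma strict_incr_ge phi : strict_incr phi -> forall i, (i <= phi i)%nat.
Proof. intros H i; induction i; [lia | specialize (H i); lia]. Qed.

Lemma strict_incr_comp phi psi :
  strict_incr phi -> strict_incr psi -> strict_incr (fun i => phi (psi i)).
Proof.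
  intros Hphi Hpsi i.
  assert (Hmono : forall a b, (a < b)%nat -> (phi a < phi b)%nat).
  { intros a b Hab; induction Hab; [apply Hphi | specialize (Hphi m); lia]. }
  apply Hmono, Hpsi.
Qed.

Lemma dist2_sym a b : dist2 a b = dist2 b a.
Proof. unfold dist2; rewrite (Rabs_minus_sym (fst a)), (Rabs_minus_sym (snd a)); reflexivity. Qed.

Lemma dist2_fst a b : Rabs (fst a - fst b) <= dist2 a b.
Proof. apply Rmax_l. Qed.

Lemma dist2_snd a b : Rabs (snd a - snd b) <= dist2 a b.
Proof. apply Rmax_r. Qed.

Lemma dist2_triang a b c : dist2 a c <= dist2 a b + dist2 b c.
Proof.
  pose proof (dist2_fst a b); pose proof (dist2_fst b c).
  pose proof (dist2_snd a b); pose proof (dist2_snd b c).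
  pose proof (Rabs_triang (fst a - fst b) (fst b - fst c)).
  pose proof (Rabs_triang (snd a - snd b) (snd b - snd c)).
  replace (fst a - fst b + (fst b - fst c)) with (fst a - fst c) in * by ring.
  replace (snd a - snd b + (snd b - snd c)) with (snd a - snd c) in * by ring.
  apply Rmax_lub; lra.
Qed.

Lemma dist2_T p q a b : dist2 (T p q a) (T p q b) = dist2 a b.
Proof.
  unfold dist2, T; simpl.
  replace (fst a + IZR p - (fst b + IZR p)) with (fst a - fst b) by ring.
  replace (snd a + IZR q - (snd b + IZR q)) with (snd a - snd b) by ring.
  reflexivity.
Qed.

Lemma T_add p q p' q' z : T p q (T p' q' z) = T (p + p') (q + q') z.
Proof. unfold T; simpl; rewrite !plus_IZR; f_equal; ring. Qed.

Lemma T_0 z : T 0 0 z = z.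
Proof. destruct z; unfold T; simpl; f_equal; ring. Qed.

Lemma T_opp_l p q z : T (- p) (- q) (T p q z) = z.
Proof. destruct z; unfold T; simpl; rewrite !opp_IZR; f_equal; ring. Qed.

Lemma iter_add a b f z : iter (a + b) f z = iter a f (iter b f z).
Proof. induction a; simpl; [reflexivity | rewrite IHa; reflexivity]. Qed.

Lemma iter_cancel f g : (forall z, g (f z) = z) -> forall n z, iter n g (iter n f z) = z.
Proof.
  intros H n; induction n as [|n IH]; intro z; [reflexivity|].
  replace (S n) with (n + 1)%nat at 1 by lia.
  rewrite iter_add; simpl; rewrite H; apply IH.
Qed.

Lemma iter_lift F : is_lift F -> forall n p q z, iter n F (T p q z) = T p q (iter n F z).
Proof. intros HL n p q z; induction n; simpl; [reflexivity | rewrite IHn, HL; reflexivity]. Qed.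

Lemma cont2_iter F : cont2 F -> forall n, cont2 (iter n F).
Proof.
  intros HF n; induction n as [|n IH]; intros z eps Heps.
  - exists eps; auto.
  - destruct (HF (iter n F z) eps Heps) as [d1 [Hd1 H1]].
    destruct (IH z d1 Hd1) as [d2 [Hd2 H2]].
    exists d2; split; [exact Hd2 | intros w Hw; apply H1, H2, Hw].
Qed.
Lemma interval_subseq_cv (u : nat -> R) a b : (forall n, a <= u n <= b) ->
  exists l phi, strict_incr phi /\ Un_cv (fun i => u (phi i)) l.
Proof.
  intros Hu.
  destruct (Bolzano_Weierstrass u _ (compact_P3 a b) Hu) as [l Hl].
  (* ValAdh gives, beyond every N, an index within 1/(i+1) of l; iterate it. *)
  assert (c : forall N i : nat, {n : nat | (N <= n)%nat /\ Rabs (u n - l) < / INR (S i)}).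
  { intros N i. apply constructive_indefinite_description.
    assert (Hpos : 0 < / INR (S i)) by (apply Rinv_0_lt_compat, lt_0_INR; lia).
    destruct (Hl (disc l (mkposreal _ Hpos)) N) as [n [Hn1 Hn2]].
    - exists (mkposreal _ Hpos). intros x Hx; exact Hx.
    - exists n; split; [exact Hn1 | exact Hn2]. }
  set (phi := fix phi (i : nat) : nat := match i with
        | O => proj1_sig (c O O)
        | S k => proj1_sig (c (S (phi k)) (S k)) end).
  assert (Hclose : forall i, Rabs (u (phi i) - l) < / INR (S i)).
  { intros [|i]; [exact (proj2 (proj2_sig (c O O))) | exact (proj2 (proj2_sig (c _ _)))]. }
  exists l, phi; split.
  - intro i; exact (proj1 (proj2_sig (c (S (phi i)) (S i)))).
  - intros eps Heps. destruct (archimed_cor1 eps Heps) as [N [HN HN0]].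
    exists N; intros i Hi; unfold R_dist.
    apply Rlt_le_trans with (/ INR (S i)); [apply Hclose|].
    apply Rle_trans with (/ INR N); [|lra].
    apply Rinv_le_contravar; [apply lt_0_INR; lia | apply le_INR; lia].
Qed.

Lemma closed_unit_disk_coords z : closed_unit_disk z -> -1 <= fst z <= 1 /\ -1 <= snd z <= 1.
Proof. unfold closed_unit_disk; intros; split; split; nra. Qed.

Lemma closed_unit_disk_closed u l :
  (forall n, closed_unit_disk (u n)) -> cv2 u l -> closed_unit_disk l.
Proof.
  intros Hu Hcv; unfold closed_unit_disk.
  apply Rnot_lt_le; intro Hgt.
  set (e := (fst l * fst l + snd l * snd l - 1) / 8).
  assert (He : Rmin e 1 > 0) by (apply Rmin_glb_lt; unfold e; lra).
  destruct (Hcv _ He) as [N HN]; specialize (HN N (le_n _)).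
  pose proof (Hu N) as Hw; pose proof (closed_unit_disk_coords _ Hw) as [Hx Hy].
  unfold closed_unit_disk in Hw.
  pose proof (Rle_lt_trans _ _ _ (dist2_fst (u N) l) HN) as A1.
  pose proof (Rle_lt_trans _ _ _ (dist2_snd (u N) l) HN) as A2.
  pose proof (Rmin_l e 1); pose proof (Rmin_r e 1).
  apply Rabs_def2 in A1; apply Rabs_def2 in A2.
  assert (fst l * fst l <= fst (u N) * fst (u N) + 3 * e) by nra.
  assert (snd l * snd l <= snd (u N) * snd (u N) + 3 * e) by nra.
  unfold e in *; lra.
Qed.

Lemma closed_unit_disk_seq_compact : seq_compact2 closed_unit_disk.
Proof.
  intros u Hu.
  destruct (interval_subseq_cv (fun n => fst (u n)) (-1) 1) as [l1 [phi1 [Hphi1 Hcv1]]].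
  { intro n; apply closed_unit_disk_coords, Hu. }
  destruct (interval_subseq_cv (fun n => snd (u (phi1 n))) (-1) 1) as [l2 [phi2 [Hphi2 Hcv2]]].
  { intro n; apply closed_unit_disk_coords, Hu. }
  assert (Hcv : cv2 (fun i => u (phi1 (phi2 i))) (l1, l2)).
  { intros eps Heps.
    destruct (Hcv1 eps Heps) as [N1 H1]; destruct (Hcv2 eps Heps) as [N2 H2].
    exists (Nat.max N1 N2); intros i Hi; apply Rmax_lub_lt; simpl.
    - apply H1. pose proof (strict_incr_ge _ Hphi2 i); lia.
    - apply H2; lia. }
  exists (l1, l2), (fun i => phi1 (phi2 i)); repeat split.
  - exact (closed_unit_disk_closed _ _ (fun n => Hu _) Hcv).
  - exact (strict_incr_comp _ _ Hphi1 Hphi2).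
  - exact Hcv.
Qed.

Lemma seq_compact2_image A h : seq_compact2 A -> cont2_on A h ->
  seq_compact2 (fun z => exists u, A u /\ z = h u).
Proof.
  intros HA Hh x Hx.
  destruct (choice _ Hx) as [u Hu].
  destruct (HA u (fun n => proj1 (Hu n))) as [l [phi [Hl [Hphi Hcv]]]].
  exists (h l), phi; repeat split; [exists l; auto | exact Hphi |].
  intros eps Heps.
  destruct (Hh l Hl eps Heps) as [d [Hd Hhd]].
  destruct (Hcv d Hd) as [N HN].
  exists N; intros n Hn.
  rewrite (proj2 (Hu (phi n))), dist2_sym.
  apply Hhd; [apply Hu | rewrite dist2_sym; apply HN, Hn].
Qed.

Lemma closed_top_disk_seq_compact D : closed_top_disk D -> seq_compact2 D.
Proof.
  intros [h [Hh [_ HD]]] u Hu.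
  destruct (seq_compact2_image _ h closed_unit_disk_seq_compact Hh u)
    as [l [phi [Hl Hrest]]]; [intro n; apply HD, Hu|].
  exists l, phi; split; [apply HD, Hl | exact Hrest].
Qed.

Lemma closed_top_disk_inhabited D : closed_top_disk D -> exists z, D z.
Proof.
  intros [h [_ [_ HD]]]; exists (h (0, 0)); apply HD.
  exists (0, 0); split; [unfold closed_unit_disk; simpl; lra | reflexivity].
Qed.

Lemma seq_compact2_bounded A : seq_compact2 A ->
  exists B, forall z w, A z -> A w -> dist2 z w <= B.
Proof.
  intros HA.
  assert (Hball : exists B, forall w, A w -> dist2 (0, 0) w <= B).
  { apply NNPP; intro Hn.
    assert (Hfar : forall n : nat, exists w, A w /\ INR n < dist2 (0, 0) w).
    { intro n; apply NNPP; intro Hn2; apply Hn; exists (INR n); intros w Hw.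
      apply Rnot_lt_le; intro Hlt; apply Hn2; exists w; auto. }
    destruct (choice _ Hfar) as [u Hu].
    destruct (HA u (fun n => proj1 (Hu n))) as [l [phi [_ [Hphi Hcv]]]].
    destruct (Hcv 1 Rlt_0_1) as [N HN].
    destruct (INR_unbounded (dist2 (0, 0) l + 1)) as [M HM].
    set (i := Nat.max N M).
    specialize (HN i ltac:(unfold i; lia)); simpl in HN.
    pose proof (proj2 (Hu (phi i))).
    pose proof (dist2_triang (0, 0) l (u (phi i))); rewrite (dist2_sym l) in *.
    assert (INR M <= INR (phi i)) by (apply le_INR; pose proof (strict_incr_ge _ Hphi i); unfold i in *; lia).
    lra. }
  destruct Hball as [B HB]; exists (B + B); intros z w Hz Hw.
  pose proof (dist2_triang z (0, 0) w) as Htri; rewrite (dist2_sym z (0, 0)) in Htri.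
  pose proof (HB _ Hz); pose proof (HB _ Hw); lra.
Qed.

Definition bounded_displacement (F : pt -> pt) (z : pt) (m : nat) (p q : Z) : Prop :=
  exists B, forall k : nat,
    dist2 (iter (m * k) F z) (T (Z.of_nat k * p) (Z.of_nat k * q) z) <= B.

Lemma Rabs_div_sub_lt (a c B eps : R) (k m : nat) : (m > 0)%nat -> eps > 0 ->
  INR k > B / eps -> Rabs (a - INR k * c) <= B -> Rabs (a / INR (m * k) - c / INR m) < eps.
Proof.
  intros Hm Heps Hk Ha.
  assert (HB : 0 <= B) by (eapply Rle_trans; [apply Rabs_pos | exact Ha]).
  assert (Hm1 : 1 <= INR m) by (replace 1 with (INR 1) by reflexivity; apply le_INR; lia).
  assert (HBe : B < eps * INR k).
  { apply (Rmult_lt_compat_r eps) in Hk; [|lra].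
    replace (B / eps * eps) with B in Hk by (field; lra); lra. }
  assert (Hk0 : 0 < INR k) by nra.
  rewrite mult_INR.
  replace (a / (INR m * INR k) - c / INR m) with ((a - INR k * c) / (INR m * INR k)) by (field; lra).
  unfold Rdiv; rewrite Rabs_mult, Rabs_inv, (Rabs_right (INR m * INR k)) by nra.
  apply (Rmult_lt_reg_r (INR m * INR k)); [nra|].
  rewrite Rmult_assoc, Rinv_l by nra; nra.
Qed.

Lemma rotation_vector_of_bounded_displacement F z m p q : (m > 0)%nat ->
  bounded_displacement F z m p q -> in_rotation_set F (IZR p / INR m, IZR q / INR m).
Proof.
  intros Hm [B HB]; exists z, (fun k => (m * k)%nat); split.
  - intro M; exists M; intros k Hk; nia.
  - intros eps Heps.
    destruct (INR_unbounded (B / eps)) as [K HK]; exists K; intros k Hk.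
    assert (HkK : INR k > B / eps) by (pose proof (le_INR _ _ Hk); lra).
    pose proof (Rle_trans _ _ _ (dist2_fst _ _) (HB k)) as Hx.
    pose proof (Rle_trans _ _ _ (dist2_snd _ _) (HB k)) as Hy.
    unfold T in Hx, Hy; simpl in Hx, Hy; rewrite !mult_IZR, <- !INR_IZR_INZ in Hx, Hy.
    unfold dist2; simpl; apply Rmax_lub_lt; apply Rabs_div_sub_lt with B; auto.
    + replace (fst (iter (m * k) F z) - fst z - INR k * IZR p)
        with (fst (iter (m * k) F z) - (fst z + INR k * IZR p)) by ring; exact Hx.
    + replace (snd (iter (m * k) F z) - snd z - INR k * IZR q)
        with (snd (iter (m * k) F z) - (snd z + INR k * IZR q)) by ring; exact Hy.
Qed.

Lemma no_rational_rotation_vector F G m p q : in_Homeo_star_lift F G -> (m > 0)%nat ->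
  ~ in_rotation_set F (IZR p / INR m, IZR q / INR m).
Proof.
  intros [_ [_ [alpha [beta [Hrot Hind]]]]] Hm Hin.
  apply Hrot in Hin; injection Hin as Halpha _.
  assert (Hm0 : INR m > 0) by (apply lt_0_INR; lia).
  destruct (Hind (- p)%Z (Z.of_nat m) 0%Z) as [_ [Hmz _]]; [|lia].
  rewrite opp_IZR, <- INR_IZR_INZ, <- Halpha; simpl; field; lra.
Qed.

Lemma bounded_displacement_of_forward_inclusion F D B m p q z0 : is_lift F ->
  (forall z w, D z -> D w -> dist2 z w <= B) -> D z0 ->
  (forall z, D z -> exists w, D w /\ iter m F z = T p q w) ->
  bounded_displacement F z0 m p q.
Proof.
  intros HL HB Hz0 Hincl.
  assert (Horbit : forall k : nat, exists w, D w /\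
     iter (m * k) F z0 = T (Z.of_nat k * p) (Z.of_nat k * q) w).
  { induction k as [|k [w [Hw Heq]]].
    - exists z0; split; [exact Hz0 | rewrite Nat.mul_0_r; symmetry; apply T_0].
    - destruct (Hincl w Hw) as [w' [Hw' Heq']].
      exists w'; split; [exact Hw'|].
      replace (m * S k)%nat with (m + m * k)%nat by lia.
      rewrite iter_add, Heq, iter_lift, Heq', T_add, Nat2Z.inj_succ by exact HL.
      f_equal; ring. }
  exists B; intro k; destruct (Horbit k) as [w [Hw ->]].
  rewrite dist2_T; apply HB; assumption.
Qed.

Lemma backward_orbit F G D m p q z0 : is_lift F ->
  (forall z, G (F z) = z) -> (forall z, F (G z) = z) -> D z0 ->
  (forall w, D w -> exists z, D z /\ T p q w = iter m F z) ->
  exists x : nat -> pt, (forall k, D (x k)) /\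
    forall j k, iter (m * j) F (x (j + k)%nat) = T (Z.of_nat j * p) (Z.of_nat j * q) (x k).
Proof.
  intros HL HGF HFG Hz0 Hincl.
  set (x := fun k => iter k (fun y => iter m G (T p q y)) z0).
  assert (HxF : forall k, iter m F (x (S k)) = T p q (x k)) by (intro k; exact (iter_cancel G F HFG m _)).
  exists x; split.
  - induction k as [|k IH]; [exact Hz0|].
    destruct (Hincl _ IH) as [z [Hz Heq]].
    change (D (iter m G (T p q (x k)))); rewrite Heq, iter_cancel by exact HGF; exact Hz.
  - induction j as [|j IH]; intro k.
    + rewrite Nat.mul_0_r; symmetry; apply T_0.
    + replace (m * S j)%nat with (m * j + m)%nat by lia.
      rewrite iter_add; replace (S j + k)%nat with (S (j + k)) by lia.
      rewrite HxF, iter_lift, IH, T_add, Nat2Z.inj_succ by exact HL.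
      f_equal; ring.
Qed.

Lemma bounded_displacement_of_backward_orbit F D B m p q (x : nat -> pt) :
  cont2 F -> seq_compact2 D -> (forall z w, D z -> D w -> dist2 z w <= B) ->
  (forall k, D (x k)) ->
  (forall j k, iter (m * j) F (x (j + k)%nat) = T (Z.of_nat j * p) (Z.of_nat j * q) (x k)) ->
  exists z, bounded_displacement F z m p q.
Proof.
  intros HF HD HB Hx Horbit.
  destruct (HD x Hx) as [y [phi [Hy [Hphi Hcv]]]].
  exists y, (1 + B); intro j.
  (* x (phi i) is close to y, and F^{mj} maps it into a translate of D when phi i >= j. *)
  destruct (cont2_iter F HF (m * j) y 1 Rlt_0_1) as [d [Hd Hcont]].
  destruct (Hcv d Hd) as [N HN].
  set (i := Nat.max N j).
  specialize (HN i ltac:(unfold i; lia)); rewrite dist2_sym in HN.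
  specialize (Hcont _ HN).
  assert (Hi : phi i = (j + (phi i - j))%nat)
    by (pose proof (strict_incr_ge _ Hphi i); unfold i in *; lia).
  rewrite Hi, Horbit in Hcont.
  pose proof (dist2_triang (iter (m * j) F y)
    (T (Z.of_nat j * p) (Z.of_nat j * q) (x (phi i - j)%nat))
    (T (Z.of_nat j * p) (Z.of_nat j * q) y)).
  rewrite dist2_T in H.
  pose proof (HB _ _ (Hx (phi i - j)%nat) Hy); lra.
Qed.

Lemma no_forward_inclusion F G D m p q : in_Homeo_star_lift F G -> closed_top_disk D ->
  (m > 0)%nat -> ~ (forall z, D z -> exists w, D w /\ iter m F z = T p q w).
Proof.
  intros HF HD Hm Hincl.
  destruct (seq_compact2_bounded D (closed_top_disk_seq_compact D HD)) as [B HB].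
  destruct (closed_top_disk_inhabited D HD) as [z0 Hz0].
  pose proof (bounded_displacement_of_forward_inclusion F D B m p q z0
                (proj1 (proj2 HF)) HB Hz0 Hincl) as Hz0bd.
  exact (no_rational_rotation_vector F G m p q HF Hm
           (rotation_vector_of_bounded_displacement F z0 m p q Hm Hz0bd)).
Qed.

Lemma no_backward_inclusion F G D m p q : in_Homeo_star_lift F G -> closed_top_disk D ->
  (m > 0)%nat -> ~ (forall w, D w -> exists z, D z /\ T p q w = iter m F z).
Proof.
  intros HF HD Hm Hincl.
  pose proof HF as [[HFc [_ [HGF HFG]]] [HL _]].
  pose proof (closed_top_disk_seq_compact D HD) as Hcpt.
  destruct (seq_compact2_bounded D Hcpt) as [B HB].
  destruct (closed_top_disk_inhabited D HD) as [z0 Hz0].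
  destruct (backward_orbit F G D m p q z0 HL HGF HFG Hz0 Hincl) as [x [Hx Horbit]].
  destruct (bounded_displacement_of_backward_orbit F D B m p q x HFc Hcpt HB Hx Horbit)
    as [z Hz].
  exact (no_rational_rotation_vector F G m p q HF Hm
           (rotation_vector_of_bounded_displacement F z m p q Hm Hz)).
Qed.

Theorem lemma6 (F G : pt -> pt) (HF : in_Homeo_star_lift F G)
  (D : pt -> Prop) (HD : closed_top_disk D) :
  ~ exists (N p q : Z), N <> 0%Z /\
     ((forall z, D z -> exists w, D w /\ iterZ F G N z = T p q w) \/
      (forall w, D w -> exists z, D z /\ T p q w = iterZ F G N z)).
Proof.
  intros [N [p [q [HN Hincl]]]].
  pose proof HF as [[_ [_ [HGF HFG]]] [HL _]].
  destruct N as [|n|n]; [congruence| |]; simpl in Hincl;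
    assert (Hm : (Pos.to_nat n > 0)%nat) by lia; set (m := Pos.to_nat n) in *.
  - destruct Hincl as [Hincl|Hincl].
    + exact (no_forward_inclusion F G D m p q HF HD Hm Hincl).
    + exact (no_backward_inclusion F G D m p q HF HD Hm Hincl).
  - (* Apply F^m to both sides: an inclusion for F^{-m} is one for F^m with (-p,-q). *)
    destruct Hincl as [Hincl|Hincl].
    + apply (no_backward_inclusion F G D m (- p) (- q) HF HD Hm).
      intros w Hw; destruct (Hincl w Hw) as [w' [Hw' Heq]].
      exists w'; split; [exact Hw'|].
      rewrite <- (T_opp_l p q w'), <- Heq, iter_lift, iter_cancel by assumption.
      reflexivity.
    + apply (no_forward_inclusion F G D m (- p) (- q) HF HD Hm).
      intros z Hz; destruct (Hincl z Hz) as [z' [Hz' Heq]].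
      exists z'; split; [exact Hz'|].
      apply (f_equal (iter m F)) in Heq.
      rewrite iter_cancel, iter_lift in Heq by assumption.
      rewrite <- Heq, T_opp_l; reflexivity.
Qed.
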